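(* Let $n\ge 1$ and $k\ge 3$ be integers and $p:=k-2$. Let $\{v_1,\dots,v_n\}$ be an orthonormal basis of $\mathbb{R}^n$ and $\lambda_r,\kappa_r\in\mathbb{R}$ with $\kappa_r<0$ for all $r$. Let $\mathcal A=\sum_{r=1}^n\lambda_r v_r^{\otimes k}$, $K=\sum_{r=1}^n\kappa_r v_rv_r^\top$, and consider $\dot x=Kx+\mathcal A x^{k-1}$ with modal coordinates $y_r(t)=v_r^\top x(t)$. Let $\mathcal I_+:=\{r:\lambda_r>0\}$, $\mathcal I_-:=\{r:\lambda_r<0\}$; for $r\in\mathcal I_+$ let $c_r:=(-\kappa_r/\lambda_r)^{1/p}>0$, and for $p$ odd and $r\in\mathcal I_-$ let $c_r:=-(\kappa_r/\lambda_r)^{1/p}<0$. Let $\mathcal R_{\mathrm{even}}:=\{x_0: |v_r^\top x_0|<c_r\ \forall r\in\mathcal I_+\}$ and $\mathcal R_{\mathrm{odd}}:=\{x_0: v_r^\top x_0<c_r\ \forall r\in\mathcal I_+,\ v_r^\top x_0>c_r\ \forall r\in\mathcal I_-\}$. Fix $\varepsilon>0$ and an initial condition $x_0$ with $x_0\in\mathcal R_{\mathrm{even}}$ if $p$ is even, or $x_0\in\mathcal R_{\mathrm{odd}}$ if $p$ is odd. For each $r$ let $T_{\varepsilon,r}:=\inf\{t\ge 0: |y_r(t)|\le\varepsilon\}$, $y_{r,0}:=v_r^\top x_0$ and $\alpha_r:=-\kappa_r>0$. Then each mode is well-defined for all $t\ge 0$ and reaches the band $|y_r(t)|\le\varepsilon$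 in finite time. If $|y_{r,0}|\le\varepsilon$ then $T_{\varepsilon,r}=0$. Otherwise ($|y_{r,0}|>\varepsilon$): (i) if $\lambda_r=0$, then $T_{\varepsilon,r}=\frac{1}{\alpha_r}\ln\big(|y_{r,0}|/\varepsilon\big)$; (ii) if $\lambda_r\neq 0$ and $p$ is even, then $$T_{\varepsilon,r}=\frac{1}{p\alpha_r}\ln\!\left(\frac{\varepsilon^{-p}-\lambda_r/\alpha_r}{|y_{r,0}|^{-p}-\lambda_r/\alpha_r}\right),$$ where the logarithm's argument is $>1$ for any $x_0\in\mathcal R_{\mathrm{even}}$ and any sufficiently small $\varepsilon>0$; (iii) if $\lambda_r\neq 0$ and $p$ is odd, then $$T_{\varepsilon,r}=\frac{1}{p\alpha_r}\ln\!\left(\frac{\varepsilon^{-p}-\operatorname{sign}(y_{r,0})\lambda_r/\alpha_r}{|y_{r,0}|^{-p}-\operatorname{sign}(y_{r,0})\lambda_r/\alpha_r}\right),$$ where the logarithm's argument is $>1$ for any $x_0\in\mathcal R_{\mathrm{odd}}$ and any sufficiently small $\varepsilon>0$.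
   Context: For $v\in\mathbb{R}^n$, $v^{\otimes k}$ is the $k$th-order tensor with entries $(v^{\otimes k})_{i_1\cdots i_k}=v_{i_1}\cdots v_{i_k}$. For a $k$th-order tensor $\mathcal A=(a_{i_1\cdots i_k})$ and $x\in\mathbb{R}^n$, $(\mathcal A x^{k-1})_i=\sum_{i_2,\dots,i_k=1}^n a_{i i_2\cdots i_k}x_{i_2}\cdots x_{i_k}$. *)

From HB Require Import structures.
From mathcomp Require Import all_boot all_order all_algebra.
From mathcomp Require Import all_classical all_reals all_analysis.
Set Implicit Arguments. Unset Strict Implicit. Unset Printing Implicit Defensive.
Import Order.TTheory GRing.Theory Num.Theory.
Import numFieldNormedType.Exports.
Local Open Scope classical_set_scope.
Local Open Scope ring_scope.

Section Defs.
Variable R : realType.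
Variables n k : nat.

Definition dotv (u w : 'cV[R]_n) : R := \sum_(i < n) u i ord0 * w i ord0.

Definition tensor := {ffun 'I_k -> 'I_n} -> R.

Definition tpow (v : 'cV[R]_n) : tensor :=
  fun ix => \prod_(j < k) v (ix j) ord0.

(* (A x^{k-1})_i = sum_{i_2..i_k} a_{i i_2 .. i_k} x_{i_2} ... x_{i_k}
   (multi-indices ix with first coordinate i) *)
Definition tapply (A : tensor) (x : 'cV[R]_n) : 'cV[R]_n :=
  \col_(i < n) \sum_(ix : {ffun 'I_k -> 'I_n} |
                    [forall j : 'I_k, (val j == 0%N) ==> (ix j == i)])
      A ix * \prod_(j : 'I_k | val j != 0%N) x (ix j) ord0.

Definition Aten (lam : 'I_n -> R) (v : 'I_n -> 'cV[R]_n) : tensor :=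
  fun ix => \sum_(r < n) lam r * tpow (v r) ix.

Definition Kmat (kap : 'I_n -> R) (v : 'I_n -> 'cV[R]_n) : 'M[R]_n :=
  \sum_(r < n) kap r *: (v r *m (v r)^T).

Definition field (lam kap : 'I_n -> R) (v : 'I_n -> 'cV[R]_n) (x : 'cV[R]_n)
  : 'cV[R]_n := Kmat kap v *m x + tapply (Aten lam v) x.

Definition is_solution (lam kap : 'I_n -> R) (v : 'I_n -> 'cV[R]_n)
    (x0 : 'cV[R]_n) (x : R -> 'cV[R]_n) : Prop :=
  x 0 = x0 /\ x t @[t --> 0^'+] --> x0 /\
  forall t : R, 0 < t -> is_derive t 1 x (field lam kap v (x t)).

Definition pexp : nat := (k - 2)%N.

Definition cplus (lam kap : 'I_n -> R) (r : 'I_n) : R :=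
  (- kap r / lam r) `^ (pexp%:R^-1).

Definition cminus (lam kap : 'I_n -> R) (r : 'I_n) : R :=
  - ((kap r / lam r) `^ (pexp%:R^-1)).

Definition R_even (lam kap : 'I_n -> R) (v : 'I_n -> 'cV[R]_n) (x0 : 'cV[R]_n)
  : Prop :=
  forall r, 0 < lam r -> `|dotv (v r) x0| < cplus lam kap r.

Definition R_odd (lam kap : 'I_n -> R) (v : 'I_n -> 'cV[R]_n) (x0 : 'cV[R]_n)
  : Prop :=
  (forall r, 0 < lam r -> dotv (v r) x0 < cplus lam kap r) /\
  (forall r, lam r < 0 -> cminus lam kap r < dotv (v r) x0).

End Defs.

From HB Require Import structures.
From mathcomp Require Import all_boot all_order all_algebra.
From mathcomp Require Import all_classical all_reals all_analysis.
From mathcomp Require Import ring lra zify.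
Import Order.TTheory GRing.Theory Num.Theory.
Import numFieldNormedType.Exports.
Local Open Scope classical_set_scope.
Local Open Scope ring_scope.

(* In the orthonormal basis [v_r] the field decouples:
   [v_r^T (K x + A x^(k-1)) = kappa_r y_r + lambda_r y_r^(p+1)], so each mode
   solves the scalar Bernoulli equation [y' = -alpha y + lambda y^(p+1)].
   With [b = lambda y0^p / alpha] it has the explicit solution
   [y0 ((1 - b) exp (p alpha t) + b)^(-1/p)], global on [0, +oo) as soon as
   [b < 1], which is exactly what the regions R_even / R_odd guarantee;
   superposing these modes gives a solution of the full system.  The
   right-hand side is locally Lipschitz, so a Gronwall argument on
   [(y - z)^2 exp (-2 L t)] forces every solution to be the explicit one.
   Its modulus is nonincreasing and reaches [eps] exactly at
   [ln W / (p alpha)] with [W = ((|y0| / eps)^p - b) / (1 - b)]; writing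
   [y0^p = sign(y0)^p |y0|^p] turns [W] into the stated quotients. *)

Definition bernoulli {R : realType} (kp lm : R) (m : nat) (u : R) : R :=
  kp * u + lm * u ^+ m.

Section ModalDecomposition.
Context {R : realType} {n : nat} (v : 'I_n -> 'cV[R]_n).

Lemma dotv_sumr (u : 'cV[R]_n) (c : 'I_n -> R) :
  dotv u (\sum_(s < n) c s *: v s) = \sum_(s < n) c s * dotv u (v s).
Proof.
rewrite /dotv; under eq_bigr => i _ do rewrite summxE mulr_sumr.
rewrite exchange_big /=; apply: eq_bigr => s _.
rewrite mulr_sumr; apply: eq_bigr => i _; rewrite !mxE; ring.
Qed.

Lemma Kmat_mulmx (kap : 'I_n -> R) (x : 'cV[R]_n) :
  Kmat kap v *m x = \sum_(s < n) (kap s * dotv (v s) x) *: v s.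
Proof.
apply/matrixP => i j; rewrite (ord1 j) !mxE summxE.
under eq_bigr => l _ do rewrite summxE mulr_suml.
rewrite exchange_big /=; apply: eq_bigr => s _.
rewrite !mxE /dotv mulr_sumr mulr_suml; apply: eq_bigr => l _.
rewrite !mxE big_ord1 !mxE; ring.
Qed.

(* The sum over multi-indices with first entry [i] factors as a product over
   the [k] positions, the first one contributing [v s i] and each of the
   others a full inner product [dotv (v s) x]. *)
Lemma tapply_Aten (k : nat) (lam : 'I_n -> R) (x : 'cV[R]_n) : (0 < k)%N ->
  tapply (Aten (k:=k) lam v) x =
  \sum_(s < n) (lam s * dotv (v s) x ^+ k.-1) *: v s.
Proof.
case: k => // k _.
apply/matrixP => i j; rewrite (ord1 j) !mxE summxE.
under eq_bigr => ix _ do rewrite /Aten mulr_suml.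
rewrite exchange_big /=; apply: eq_bigr => s _.
rewrite !mxE.
pose G (m : 'I_k.+1) (l : 'I_n) :=
  if val m == 0%N then v s l ord0 else v s l ord0 * x l ord0.
pose Q (m : 'I_k.+1) (l : 'I_n) := (val m == 0%N) ==> (l == i).
transitivity (lam s * \sum_(f in family Q) \prod_m G m (f m)).
  rewrite mulr_sumr; apply: eq_big => [ix|ix _]; first by rewrite inE.
  rewrite /tpow -mulrA; congr (_ * _).
  rewrite [X in _ * X]big_mkcond -big_split /=; apply: eq_bigr => m _.
  by rewrite /G; case: (val m == 0%N); rewrite /= ?mulr1.
rewrite -bigA_distr_big_dep big_ord_recl /= /Q /G /= big_pred1_eq.
have -> : \prod_(m < k) \sum_(l < n) G (lift ord0 m) l = dotv (v s) x ^+ k.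
  by rewrite (eq_bigr (fun _ => dotv (v s) x)) ?prodr_const ?card_ord.
by ring.
Qed.

Lemma field_modal (k : nat) (lam kap : 'I_n -> R) (x : 'cV[R]_n) : (0 < k)%N ->
  field k lam kap v x =
  \sum_(s < n) bernoulli (kap s) (lam s) k.-1 (dotv (v s) x) *: v s.
Proof.
move=> k0; rewrite /field Kmat_mulmx tapply_Aten // -big_split /=.
by under eq_bigr => s _ do rewrite -scalerDl.
Qed.

Hypothesis horth : forall r s : 'I_n, dotv (v r) (v s) = (r == s)%:R.

Lemma dotv_modal (r : 'I_n) (c : 'I_n -> R) :
  dotv (v r) (\sum_(s < n) c s *: v s) = c r.
Proof.
rewrite dotv_sumr (bigD1 r) //= horth eqxx mulr1 big1 ?addr0 // => s sr.
by rewrite horth eq_sym (negbTE sr) mulr0.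
Qed.

(* The matrix [V] with columns [v s] satisfies [V^T V = 1]; being square,
   it also satisfies [V V^T = 1]. *)
Lemma modal_expansion (x : 'cV[R]_n) : x = \sum_(s < n) dotv (v s) x *: v s.
Proof.
pose V : 'M[R]_n := \matrix_(i, j) v j i ord0.
have VtV : V^T *m V = 1%:M.
  apply/matrixP => i j; rewrite !mxE -horth /dotv.
  by apply: eq_bigr => l _; rewrite !mxE.
apply/matrixP => i j; rewrite (ord1 j).
have := congr1 (fun M => (M *m x) i ord0) (mulmx1C VtV).
rewrite mul1mx => <-; rewrite -mulmxA !mxE summxE.
apply: eq_bigr => s _; rewrite !mxE mulrC /dotv; congr (_ * _).
by apply: eq_bigr => l _; rewrite !mxE.
Qed.

Lemma dotv_field (k : nat) (lam kap : 'I_n -> R) (x : 'cV[R]_n) (r : 'I_n) :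
  (0 < k)%N ->
  dotv (v r) (field k lam kap v x) =
  bernoulli (kap r) (lam r) k.-1 (dotv (v r) x).
Proof. by move=> k0; rewrite field_modal // dotv_modal. Qed.

End ModalDecomposition.

Lemma is_derive_mxP {R : realFieldType} {V : normedModType R} m p
    (M : V -> 'M[R]_(m, p)) (t w : V) (D : 'M[R]_(m, p)) :
  is_derive t w M D <-> forall i j, is_derive t w (fun s => M s i j) (D i j).
Proof.
split=> [[dM <-] i j|dMij].
  apply: DeriveDef; first by move/derivable_mxP : dM; apply.
  by rewrite derive_mx // mxE.
have dM : derivable M t w by apply/derivable_mxP => i j; case: (dMij i j).
apply: DeriveDef => //; rewrite derive_mx //; apply/matrixP => i j.
by rewrite mxE; case: (dMij i j).
Qed.

Section DotvCalculus.
Context {R : realType}.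

Lemma is_derive_dotv {n : nat} (u : 'cV[R]_n) {x : R -> 'cV[R]_n}
    {dx : 'cV[R]_n} {t : R} :
  is_derive t 1 x dx -> is_derive t 1 (fun s => dotv u (x s)) (dotv u dx).
Proof.
by move/is_derive_mxP => dx_ij; rewrite /dotv -fct_sumE; apply: is_derive_sum.
Qed.

Lemma cvg_dotv {n : nat} (u : 'cV[R]_n) T (F : set_system T) {FF : Filter F}
    (x : T -> 'cV[R]_n) (x0 : 'cV[R]_n) :
  x @ F --> x0 -> dotv u (x s) @[s --> F] --> dotv u x0.
Proof.
move=> xx0; apply: cvg_big => [|i _]; first exact: add_continuous.
apply: cvgMl_tmp.
exact: continuous_cvg _ (@coord_continuous R n 1 i ord0 x0) xx0.
Qed.

End DotvCalculus.

Section ScalarUniqueness.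
Context {R : realType}.

Lemma bounded_within_cc {g : R -> R} {a b : R} : a <= b ->
  {within `[a, b], continuous g} ->
  exists M, forall s, s \in `[a, b] -> `|g s| <= M.
Proof.
move=> ab cg.
have [c1 _ gmax] := EVT_max ab cg; have [c2 _ gmin] := EVT_min ab cg.
exists (`|g c1| + `|g c2|) => s abs.
have := gmax _ abs; have := gmin _ abs.
have := ler_norm (g c1); have := ler_norm (- g c2); have := normr_ge0 (g c1).
have := normr_ge0 (g c2); rewrite normrN ler_norml => *; apply/andP; split; lra.
Qed.

Lemma is_derive_expR_scale (c t : R) :
  is_derive t 1 (fun s : R => expR (c * s)) (c * expR (c * t)).
Proof.
have dcs : is_derive t 1 (fun s : R => c * s) c.
  have := is_deriveZ c (@is_derive_id _ _ t 1).
  by rewrite /GRing.scale /= mulr1.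
by have := is_derive1_comp (is_derive_expR (c * t)) dcs; rewrite mulrC.
Qed.

(* [d ^+ 2 * expR (-2 L s)] has nonpositive derivative and vanishes at [0]. *)
Lemma gronwall_sqr_eq0 (d d' : R -> R) (L t : R) : 0 <= t ->
  d 0 = 0 -> d @ 0^'+ --> 0 ->
  (forall s : R, 0 < s -> is_derive s 1 d (d' s)) ->
  (forall s : R, 0 < s < t -> d s * d' s <= L * d s ^+ 2) ->
  d t = 0.
Proof.
rewrite le_eqVlt => /orP[/eqP <- //|t0] d00 dc dd dle.
pose e (s : R) := expR (- (2 * L) * s); pose g (s : R) := d s * d s * e s.
have dg (s : R) : 0 < s ->
    is_derive s 1 g (2 * (d s * d' s - L * d s ^+ 2) * e s).
  move=> s0; have := is_deriveM (is_deriveM (dd s s0) (dd s s0))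
    (is_derive_expR_scale (- (2 * L)) s).
  move=> h; apply: (is_derive_eq h); rewrite /GRing.scale /= /e.
  by rewrite -[(d * d) s]/(d s * d s); ring.
have g0 : g 0 = 0 by rewrite /g d00 !mul0r.
have gc : g @ 0^'+ --> g 0.
  have ec : e @ 0^'+ --> e 0.
    apply: cvg_at_right_filter; apply: differentiable_continuous.
    by apply/derivable1_diffP; case: (is_derive_expR_scale (- (2 * L)) 0).
  have -> : g 0 = 0 * 0 * e 0 by rewrite g0 !mul0r.
  exact: cvgM (cvgM dc dc) ec.
have gcont : {within `[0, t], continuous g}.
  apply/derivable_oo_LRcontinuous_within.
  apply: (derivable_oy_continuousWoo t0 (lexx 0)).
  by split => // s; rewrite in_itv /= andbT => /dg [].
have : g t <= g 0.
  apply: (ler0_derive1_le_cc _ _ gcont); rewrite ?in_itv /= ?lexx ?(ltW t0) //.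
    by move=> s; rewrite in_itv /= => /andP[/dg[]].
  move=> s; rewrite in_itv /= => sint; have /andP[s0 _] := sint.
  rewrite derive1E; have [_ ->] := dg s s0; rewrite pmulr_lle0 ?expR_gt0 //.
  by rewrite pmulr_rle0 // subr_le0 dle.
rewrite g0 /g pmulr_lle0 ?expR_gt0 // => dt.
by apply/eqP; rewrite -sqrf_eq0 expr2 eq_le dt -expr2 sqr_ge0.
Qed.

Variable F : R -> R.
Hypothesis F_lipschitz : forall M, exists L, L.-lipschitz_[set u | `|u| <= M] F.

Lemma ode_solution_unique (y z : R -> R) : y 0 = z 0 ->
  y @ 0^'+ --> y 0 -> z @ 0^'+ --> z 0 ->
  (forall t : R, 0 < t -> is_derive t 1 y (F (y t))) ->
  (forall t : R, 0 < t -> is_derive t 1 z (F (z t))) ->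
  forall t : R, 0 <= t -> y t = z t.
Proof.
move=> yz0 yc zc dy dz t; rewrite le_eqVlt => /orP[/eqP <- //|t0].
have cont_cc (w : R -> R) : w @ 0^'+ --> w 0 ->
    (forall s : R, 0 < s -> is_derive s 1 w (F (w s))) ->
    {within `[0, t], continuous w}.
  move=> wc dw; apply/derivable_oo_LRcontinuous_within.
  apply: (derivable_oy_continuousWoo t0 (lexx 0)); split => // s.
  by rewrite in_itv /= andbT => /dw [].
have [My yM] := bounded_within_cc (ltW t0) (cont_cc y yc dy).
have [Mz zM] := bounded_within_cc (ltW t0) (cont_cc z zc dz).
have [L FL] := F_lipschitz (Num.max My Mz).
apply/eqP; rewrite -subr_eq0; apply/eqP.
apply: (@gronwall_sqr_eq0 (y \- z) (fun s => F (y s) - F (z s)) L t).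
- exact: ltW.
- by rewrite /= yz0 subrr.
- by apply: cvg_trans (cvgB yc zc) _; rewrite yz0 subrr.
- by move=> s s0; apply: is_deriveB; [exact: dy|exact: dz].
move=> s /andP[s0 st] /=.
have st' : s \in `[0, t] by rewrite in_itv /= (ltW s0) (ltW st).
have lip : `|F (y s) - F (z s)| <= L * `|y s - z s|.
  by apply: (FL (y s, z s)); split => /=; rewrite le_max ?yM ?zM ?orbT.
apply: (le_trans (ler_norm _)); rewrite normrM.
apply: (le_trans (ler_wpM2l (normr_ge0 _) lip)).
by rewrite mulrCA -normrM ger0_norm -?expr2 ?sqr_ge0.
Qed.

End ScalarUniqueness.

Section BernoulliEquation.
Context {R : realType}.

(* [u ^+ m - w ^+ m = (u - w) * \sum_i u ^+ (m.-1 - i) * w ^+ i]. *)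
Lemma bernoulli_lipschitz (kp lm : R) (m : nat) (M : R) :
  exists L, L.-lipschitz_[set u | `|u| <= M] (bernoulli kp lm m).
Proof.
have [M0|M0] := ltP M 0.
  by exists 0 => -[u w] [/= uM _]; have := normr_ge0 u; lra.
exists (`|kp| + `|lm| * (m%:R * M ^+ m.-1)) => -[u w] [/= uM wM].
have -> : bernoulli kp lm m u - bernoulli kp lm m w =
    (u - w) * (kp + lm * \sum_(i < m) u ^+ (m.-1 - i) * w ^+ i).
  by rewrite /bernoulli mulrDr [X in _ = _ + X]mulrCA -subrXX; ring.
rewrite normrM mulrC ler_wpM2r //.
apply: (le_trans (ler_normD _ _)); rewrite lerD2l normrM ler_wpM2l //.
apply: (le_trans (ler_norm_sum _ _ _)).
rewrite mulr_natl -[m in _ *+ m]card_ord -sumr_const; apply: ler_sum => i _.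
have -> : M ^+ m.-1 = M ^+ (m.-1 - i) * M ^+ i.
  by rewrite -exprD subnK //; have := ltn_ord i; lia.
by rewrite normrM !normrX; apply: ler_pM; rewrite ?exprn_ge0 ?lerXn2r ?inE.
Qed.

Lemma powR_invnK (u : R) (p : nat) : (0 < p)%N -> 0 <= u ->
  (u `^ p%:R^-1) ^+ p = u.
Proof.
move=> p0 u0; rewrite -powR_mulrn ?powR_ge0 // -powRrM mulVf ?powRr1 //.
by rewrite pnatr_eq0 -lt0n.
Qed.

Variables (a lm y0 : R) (p : nat).
Hypotheses (a_gt0 : 0 < a) (p_gt0 : (0 < p)%N).
Let b := lm / a * y0 ^+ p.
Hypothesis b_lt1 : b < 1.

(* [u := y ^- p] solves the linear equation [u' = p a u - p lm], whence
   [y ^- p = y0 ^- p * bernoulli_denom]. *)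
Definition bernoulli_denom (t : R) : R := (1 - b) * expR (p%:R * a * t) + b.

Definition bernoulli_sol (t : R) : R := y0 * bernoulli_denom t `^ (- p%:R^-1).

Lemma bernoulli_denom_ge1 (t : R) : 0 <= t -> 1 <= bernoulli_denom t.
Proof.
move=> t0; have : 1 <= expR (p%:R * a * t).
  by rewrite -expR0 ler_expR !mulr_ge0 // ltW.
by rewrite /bernoulli_denom; have := b_lt1; nra.
Qed.

Lemma bernoulli_sol0 : bernoulli_sol 0 = y0.
Proof.
by rewrite /bernoulli_sol /bernoulli_denom mulr0 expR0 mulr1 subrK powR1 mulr1.
Qed.

Lemma is_derive_bernoulli_sol (t : R) : 0 <= t ->
  is_derive t 1 bernoulli_sol (bernoulli (- a) lm p.+1 (bernoulli_sol t)).
Proof.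
move=> t0; set E := bernoulli_denom t.
have E_gt0 : 0 < E := lt_le_trans ltr01 (bernoulli_denom_ge1 t t0).
have dE : is_derive t 1 bernoulli_denom
    ((1 - b) * (p%:R * a * expR (p%:R * a * t))).
  have := is_deriveD (is_deriveZ (1 - b) (is_derive_expR_scale (p%:R * a) t))
    (is_derive_cst b t 1).
  by rewrite /GRing.scale /= addr0.
have := is_deriveZ y0 (is_derive1_comp (is_derive1_powR (- p%:R^-1) E_gt0) dE).
move=> h; apply: (is_derive_eq h); rewrite /GRing.scale /=.
have pn0 : p%:R != 0 :> R by rewrite pnatr_eq0 -lt0n.
set w := E `^ (- p%:R^-1).
have wp : w ^+ p = E^-1.
  rewrite /w -powR_mulrn ?powR_ge0 // -powRrM mulNr mulVf //.
  by rewrite powR_inv1 // ltW.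
have wr : E `^ (- p%:R^-1 - 1) = w * E^-1.
  by rewrite powRD ?(gt_eqF E_gt0) ?implybT // powR_inv1 // ltW.
have Eb : (1 - b) * (p%:R * a * expR (p%:R * a * t)) = p%:R * a * (E - b).
  by rewrite /E /bernoulli_denom addrK mulrCA.
rewrite wr /bernoulli /bernoulli_sol -/E -/w exprMn exprS [w ^+ _]exprS wp Eb.
by rewrite /b; field; rewrite pn0 (gt_eqF a_gt0) (gt_eqF E_gt0).
Qed.

Lemma norm_bernoulli_sol (t : R) : 0 <= t ->
  `|bernoulli_sol t| = `|y0| / bernoulli_denom t `^ p%:R^-1.
Proof.
move=> t0; rewrite /bernoulli_sol powRN normrM [X in _ * X]ger0_norm //.
by rewrite invr_ge0 powR_ge0.
Qed.

Lemma norm_bernoulli_sol_le_y0 (t : R) : 0 <= t ->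
  `|bernoulli_sol t| <= `|y0|.
Proof.
move=> t0; rewrite norm_bernoulli_sol // ler_pdivrMr.
  rewrite ler_peMr // -[X in X <= _](powRr0 (bernoulli_denom t)).
  by apply: ler_powR; rewrite ?invr_ge0 ?bernoulli_denom_ge1.
by rewrite powR_gt0 // (lt_le_trans ltr01 (bernoulli_denom_ge1 t t0)).
Qed.

Definition bernoulli_hit_arg (eps : R) : R :=
  ((`|y0| / eps) ^+ p - b) / (1 - b).

Lemma bernoulli_hit_arg_gt1 (eps : R) : 0 < eps -> eps < `|y0| ->
  1 < bernoulli_hit_arg eps.
Proof.
move=> e0 ey; rewrite /bernoulli_hit_arg ltr_pdivlMr ?subr_gt0 // mul1r ltrD2r.
by rewrite exprn_egt1 ?ltr_pdivlMr ?mul1r -?lt0n.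
Qed.

Definition bernoulli_hit_time (eps : R) : R :=
  if `|y0| <= eps then 0 else (p%:R * a)^-1 * ln (bernoulli_hit_arg eps).

Lemma bernoulli_hit_time_ge0 (eps : R) : 0 < eps -> 0 <= bernoulli_hit_time eps.
Proof.
move=> e0; rewrite /bernoulli_hit_time; case: (leP `|y0| eps) => // ey.
rewrite mulr_ge0 ?ln_ge0 ?invr_ge0 ?mulr_ge0 ?(ltW a_gt0) //.
exact/ltW/bernoulli_hit_arg_gt1.
Qed.

Lemma norm_bernoulli_sol_le (eps t : R) : 0 < eps -> 0 <= t ->
  (`|bernoulli_sol t| <= eps) = (bernoulli_hit_time eps <= t).
Proof.
move=> e0 t0; rewrite /bernoulli_hit_time; case: (leP `|y0| eps) => [y0e|ey].
  by rewrite t0 (le_trans (norm_bernoulli_sol_le_y0 t t0)).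
set E := bernoulli_denom t.
have E1 : 1 <= E by apply: bernoulli_denom_ge1.
have Eq_gt0 : 0 < E `^ p%:R^-1 by rewrite powR_gt0 // (lt_le_trans ltr01 E1).
have pa_gt0 : 0 < p%:R * a by rewrite mulr_gt0 // ltr0n.
have W_gt0 : 0 < bernoulli_hit_arg eps.
  exact: lt_trans ltr01 (bernoulli_hit_arg_gt1 eps e0 ey).
rewrite ler_pdivrMl // -[(ln _ <= _)%R]ler_expR lnK ?posrE //.
rewrite norm_bernoulli_sol // -/E ler_pdivrMr // -(ler_pdivrMl _ _ e0).
rewrite -(ler_pXn2r p_gt0) ?nnegrE ?(ltW Eq_gt0) //; last first.
  by rewrite mulr_ge0 ?invr_ge0 ?(ltW e0).
rewrite powR_invnK ?(le_trans ler01 E1) //.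
rewrite /bernoulli_hit_arg /E /bernoulli_denom.
by rewrite [eps^-1 * _]mulrC ler_pdivrMr ?subr_gt0 // lerBlDr [expR _ * _]mulrC.
Qed.

End BernoulliEquation.

Lemma bernoulli_band {R : realType} (a lm y0 eps : R) (p : nat) (y : R -> R) :
  0 < a -> (0 < p)%N -> lm / a * y0 ^+ p < 1 -> 0 < eps ->
  y 0 = y0 -> y @ 0^'+ --> y0 ->
  (forall t : R, 0 < t -> is_derive t 1 y (bernoulli (- a) lm p.+1 (y t))) ->
  [set t | 0 <= t /\ `|y t| <= eps] =
  [set` `[bernoulli_hit_time a lm y0 p eps, +oo[].
Proof.
move=> a0 p0 b1 e0 yy0 yc dy.
have dsol (t : R) : 0 <= t -> is_derive t 1 (bernoulli_sol a lm y0 p)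
    (bernoulli (- a) lm p.+1 (bernoulli_sol a lm y0 p t)).
  exact: is_derive_bernoulli_sol.
have y_sol : forall t : R, 0 <= t -> y t = bernoulli_sol a lm y0 p t.
  apply: (ode_solution_unique _ (bernoulli_lipschitz (- a) lm p.+1)) => //.
  - by rewrite yy0 bernoulli_sol0.
  - by rewrite yy0.
  - apply: cvg_at_right_filter; apply: differentiable_continuous.
    by apply/derivable1_diffP; case: (dsol 0 (lexx 0)).
  - by move=> t /ltW /dsol.
have T0 : 0 <= bernoulli_hit_time a lm y0 p eps.
  exact: bernoulli_hit_time_ge0.
apply/seteqP; split => t /=; rewrite in_itv /= andbT.
  by case=> t0; rewrite y_sol // norm_bernoulli_sol_le.
move=> Tt; have t0 := le_trans T0 Tt.
by split => //; rewrite y_sol // norm_bernoulli_sol_le.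
Qed.

Section ModalSolutions.
Context {R : realType} {n k : nat} {v : 'I_n -> 'cV[R]_n} {lam kap : 'I_n -> R}.
Hypothesis horth : forall r s : 'I_n, dotv (v r) (v s) = (r == s)%:R.
Hypothesis k_gt0 : (0 < k)%N.

Lemma is_solution_mode {x0 : 'cV[R]_n} {x : R -> 'cV[R]_n} (r : 'I_n) :
  is_solution k lam kap v x0 x ->
  let y t := dotv (v r) (x t) in
  [/\ y 0 = dotv (v r) x0, y @ 0^'+ --> dotv (v r) x0 &
      forall t : R, 0 < t ->
        is_derive t 1 y (bernoulli (kap r) (lam r) k.-1 (y t))].
Proof.
move=> [x00 [xc dx]] y; split; first by rewrite /y x00.
  exact: cvg_dotv.
by move=> t t0; have := is_derive_dotv (v r) (dx t t0); rewrite dotv_field.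
Qed.

Lemma is_solution_modal (x0 : 'cV[R]_n) (y : 'I_n -> R -> R) :
  (forall s, y s 0 = dotv (v s) x0) ->
  (forall s (t : R), 0 <= t ->
     is_derive t 1 (y s) (bernoulli (kap s) (lam s) k.-1 (y s t))) ->
  is_solution k lam kap v x0 (fun t => \sum_(s < n) y s t *: v s).
Proof.
move=> y0 dy; set X := fun t => _.
have dX (t : R) : 0 <= t -> is_derive t 1 X (field k lam kap v (X t)).
  move=> t0; apply/is_derive_mxP => i j.
  rewrite field_modal // summxE.
  under eq_bigr => s _ do rewrite dotv_modal // mxE mulrC.
  have -> : (fun u => X u i j) = \sum_(s < n) (fun u => v s i j * y s u).
    apply/funext => u; rewrite fct_sumE summxE.
    by apply: eq_bigr => s _; rewrite mxE mulrC.
  by apply: is_derive_sum => s; apply: is_deriveZ; apply: dy.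
have X0 : X 0 = x0.
  by rewrite [RHS](modal_expansion _ horth); apply: eq_bigr => s _; rewrite y0.
split=> //; split; last by move=> t /ltW /dX.
rewrite -[x0]X0; apply: cvg_at_right_filter; apply: differentiable_continuous.
by apply/derivable1_diffP; case: (dX 0 (lexx 0)).
Qed.

Lemma exists_solution (x0 : 'cV[R]_n) (p : nat) : (0 < p)%N -> k.-1 = p.+1 ->
  (forall s, kap s < 0) ->
  (forall s, lam s / - kap s * dotv (v s) x0 ^+ p < 1) ->
  exists x, is_solution k lam kap v x0 x.
Proof.
move=> p0 kp kap_lt0 b1.
exists (fun t => \sum_(s < n)
  bernoulli_sol (- kap s) (lam s) (dotv (v s) x0) p t *: v s).
apply: is_solution_modal => [s|s t t0]; first exact: bernoulli_sol0.
rewrite kp -[in bernoulli (kap s)](opprK (kap s)).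
by apply: is_derive_bernoulli_sol; rewrite ?oppr_gt0.
Qed.

Lemma is_solution_band (x0 : 'cV[R]_n) (x : R -> 'cV[R]_n) (p : nat)
    (r : 'I_n) (eps : R) :
  (0 < p)%N -> k.-1 = p.+1 -> kap r < 0 ->
  lam r / - kap r * dotv (v r) x0 ^+ p < 1 -> 0 < eps ->
  is_solution k lam kap v x0 x ->
  [set t | 0 <= t /\ `|dotv (v r) (x t)| <= eps] =
  [set` `[bernoulli_hit_time (- kap r) (lam r) (dotv (v r) x0) p eps, +oo[].
Proof.
move=> p0 kp kap_lt0 b1 e0 /(is_solution_mode r) [yy0 yc dy].
by apply: bernoulli_band; rewrite ?oppr_gt0 // => t /dy; rewrite kp opprK.
Qed.

End ModalSolutions.

Section InitialRegion.
Context {R : realType}.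

Lemma expr_lt_of_norm_lt_root (w y : R) (p : nat) : (0 < p)%N -> 0 < w ->
  `|y| < w `^ p%:R^-1 -> y ^+ p < w.
Proof.
move=> p0 w0 yw; apply: le_lt_trans (ler_norm (y ^+ p)) _.
rewrite normrX -[ltRHS](powR_invnK w p p0 (ltW w0)).
by rewrite ltr_pXn2r ?nnegrE ?powR_ge0.
Qed.

Lemma expr_lt_of_lt_root_odd (w y : R) (p : nat) : odd p -> 0 < w ->
  y < w `^ p%:R^-1 -> y ^+ p < w.
Proof.
move=> podd w0 yw; have p0 : (0 < p)%N by case: p podd yw.
have [y0|y0] := leP 0 y.
  by apply: expr_lt_of_norm_lt_root; rewrite ?ger0_norm.
by apply: le_lt_trans w0; rewrite exprn_odd_le0 // ltW.
Qed.

Lemma region_bernoulli_lt1 {n k : nat} (v : 'I_n -> 'cV[R]_n)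
    (lam kap : 'I_n -> R) (x0 : 'cV[R]_n) :
  (3 <= k)%N -> (forall r, kap r < 0) ->
  (if odd (pexp k) then R_odd k lam kap v x0 else R_even k lam kap v x0) ->
  forall r, lam r / - kap r * dotv (v r) x0 ^+ pexp k < 1.
Proof.
move=> hk hkap hx0 r; have p0 : (0 < pexp k)%N by rewrite /pexp; lia.
set p := pexp k in hx0 p0 *; set y := dotv (v r) x0.
have a0 : 0 < - kap r by rewrite oppr_gt0.
rewrite mulrAC ltr_pdivrMr // mul1r.
have [lneg|lpos|->] := ltrgtP (lam r) 0; last by rewrite mul0r.
  case: ifP hx0 => hodd; last first.
    move=> _; apply: le_lt_trans a0.
    by rewrite nmulr_rle0 // exprn_even_ge0 ?hodd.
  case=> _ /(_ r lneg); rewrite /cminus ltrNl => ycm.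
  have : (- y) ^+ p < kap r / lam r.
    by apply: expr_lt_of_lt_root_odd; rewrite // -divrNN divr_gt0 ?oppr_gt0.
  rewrite exprNn -signr_odd hodd expr1 mulN1r ltrNl -mulNr.
  by rewrite ltr_ndivrMr // mulrC.
have yp : y ^+ p < - kap r / lam r.
  have c_gt0 : 0 < - kap r / lam r by rewrite divr_gt0.
  case: ifP hx0 => hodd => [[/(_ r lpos) yc _]|/(_ r lpos) yc].
    exact: expr_lt_of_lt_root_odd yc.
  exact: expr_lt_of_norm_lt_root yc.
by rewrite mulrC -ltr_pdivlMr.
Qed.

End InitialRegion.

Section HittingArgument.
Context {R : realType} {a lm y0 eps : R} {p : nat}.
Hypotheses (a_gt0 : 0 < a) (eps_gt0 : 0 < eps) (eps_lt : eps < `|y0|).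

Lemma bernoulli_hit_argE (s : R) : lm / a * y0 ^+ p < 1 ->
  y0 ^+ p = s * `|y0| ^+ p ->
  bernoulli_hit_arg a lm y0 p eps =
  (eps ^- p - s * lm / a) / (`|y0| ^- p - s * lm / a).
Proof.
move=> b1 hs; rewrite /bernoulli_hit_arg hs expr_div_n.
have Z0 : 0 < `|y0| ^+ p by rewrite exprn_gt0 // (lt_trans eps_gt0).
move: b1; rewrite hs mulrAC ltr_pdivrMr // mul1r => b1.
field; rewrite (gt_eqF a_gt0) (gt_eqF Z0) expf_neq0 ?(gt_eqF eps_gt0) //=.
by rewrite andbT mulNr subr_eq0 eq_sym lt_eqF // -mulrA mulrCA.
Qed.

Lemma bernoulli_hit_time_lm0 : (0 < p)%N ->
  bernoulli_hit_time a 0 y0 p eps = a^-1 * ln (`|y0| / eps).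
Proof.
move=> p0; rewrite /bernoulli_hit_time leNgt eps_lt /bernoulli_hit_arg.
rewrite /= !mul0r !subr0 divr1 lnXn; last first.
  exact: divr_gt0 (lt_trans eps_gt0 eps_lt) eps_gt0.
by rewrite -mulr_natr; field; rewrite (gt_eqF a_gt0) pnatr_eq0 -lt0n p0.
Qed.

Hypothesis b_lt1 : lm / a * y0 ^+ p < 1.

Lemma bernoulli_hit_argE_even : ~~ odd p ->
  bernoulli_hit_arg a lm y0 p eps = (eps ^- p - lm / a) / (`|y0| ^- p - lm / a).
Proof.
move=> peven; rewrite (bernoulli_hit_argE 1 b_lt1) ?mul1r //.
by rewrite -normrX ger0_norm // exprn_even_ge0.
Qed.

Lemma bernoulli_hit_argE_odd : odd p ->
  bernoulli_hit_arg a lm y0 p eps =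
  (eps ^- p - Num.sg y0 * lm / a) / (`|y0| ^- p - Num.sg y0 * lm / a).
Proof.
move=> podd; rewrite (bernoulli_hit_argE (Num.sg y0) b_lt1) //.
rewrite {1}(numEsg y0) exprMn sgr_odd ?podd ?expr1 //.
by rewrite -normr_gt0 (lt_trans eps_gt0).
Qed.

End HittingArgument.

Theorem proposition2 (R : realType) (n k : nat)
  (hn : (1 <= n)%N) (hk : (3 <= k)%N)
  (v : 'I_n -> 'cV[R]_n) (lam kap : 'I_n -> R)
  (horth : forall r s : 'I_n, dotv (v r) (v s) = (r == s)%:R)
  (hkap : forall r, kap r < 0)
  (eps : R) (heps : 0 < eps) (x0 : 'cV[R]_n)
  (hx0 : if odd (pexp k) then R_odd k lam kap v x0
         else R_even k lam kap v x0) :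
  (exists x : R -> 'cV[R]_n, is_solution k lam kap v x0 x) /\
  forall x : R -> 'cV[R]_n, is_solution k lam kap v x0 x ->
  forall r : 'I_n,
    let y := fun t => dotv (v r) (x t) in
    let y0 := dotv (v r) x0 in
    let a := - kap r in
    let p : R := (pexp k)%:R in
    let T := inf [set t : R | 0 <= t /\ `|y t| <= eps] in
    (exists t, 0 <= t /\ `|y t| <= eps) /\
    (`|y0| <= eps -> T = 0) /\
    (eps < `|y0| ->
      (lam r = 0 -> T = a^-1 * ln (`|y0| / eps)) /\
      (lam r != 0 -> ~~ odd (pexp k) ->
        let arg := (eps ^- pexp k - lam r / a) / (`|y0| ^- pexp k - lam r / a) in
        1 < arg /\ T = (p * a)^-1 * ln arg) /\
      (lam r != 0 -> odd (pexp k) ->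
        let arg := (eps ^- pexp k - Num.sg y0 * lam r / a)
                   / (`|y0| ^- pexp k - Num.sg y0 * lam r / a) in
        1 < arg /\ T = (p * a)^-1 * ln arg)).
Proof.
have p0 : (0 < pexp k)%N by rewrite /pexp; lia.
have k1 : k.-1 = (pexp k).+1 by rewrite /pexp; lia.
have k0 : (0 < k)%N by lia.
have b1 := region_bernoulli_lt1 v lam kap x0 hk hkap hx0.
split; first exact: exists_solution horth k0 _ _ p0 k1 hkap b1.
move=> x hx r y y0 a p T.
have a0 : 0 < a by rewrite oppr_gt0.
set T0 := bernoulli_hit_time a (lam r) y0 (pexp k) eps.
have band : [set t | 0 <= t /\ `|y t| <= eps] = [set` `[T0, +oo[].
  exact: is_solution_band horth k0 _ _ _ _ _ p0 k1 (hkap r) (b1 r) heps hx.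
have -> : T = T0 by rewrite /T band inf_itv.
split.
  suff : [set t | 0 <= t /\ `|y t| <= eps] T0 by exists T0.
  by rewrite band /= in_itv /= lexx.
split; first by move=> small; rewrite /T0 /bernoulli_hit_time small.
move=> big; split; first by move=> l0; rewrite /T0 l0 bernoulli_hit_time_lm0.
rewrite /T0 /bernoulli_hit_time leNgt big /=.
have W1 : 1 < bernoulli_hit_arg a (lam r) y0 (pexp k) eps.
  exact: bernoulli_hit_arg_gt1.
split=> _ hp.
  by rewrite -(bernoulli_hit_argE_even a0 heps big (b1 r) hp).
by rewrite -(bernoulli_hit_argE_odd a0 heps big (b1 r) hp).
Qed.
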